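(* Let $G$ be a (not necessarily connected) graph on $n\ge1$ vertices with adjacency matrix $A$, let $m\ge1$, and let $\alpha\in\mathrm{ev}(A)\setminus\{0,-m,-2m\}$. Then there exist $\mu\in\mathbb{R}$, $f\in\mathbb{R}^m$, $g\in\mathbb{R}^n$ with \[ (J_m+\alpha I)f=\tfrac{\mu}{2}\mathbf 1,\quad (A-J_n-\alpha I)g=-\tfrac{\mu}{2}\mathbf 1,\quad \langle f,f\rangle+\langle g,g\rangle=1,\quad \langle\mathbf 1,f\rangle+\langle\mathbf 1,g\rangle=0 \] if and only if there is a vector $g\in\mathbb{R}^n$ with $Ag=\alpha g$, $\langle g,g\rangle=1$ and $\langle\mathbf 1,g\rangle=0$.
   Context: $\mathrm{ev}(A)$ is the set of eigenvalues of $A$; $J_k$ the $k\times k$ all-ones matrix; $\mathbf 1$ the all-ones vector of the appropriate size; $I$ the identity. *)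

From mathcomp Require Import all_boot all_order all_algebra.
From mathcomp Require Import reals.
Set Implicit Arguments. Unset Strict Implicit. Unset Printing Implicit Defensive.
Import Order.TTheory GRing.Theory Num.Theory.
Local Open Scope ring_scope.

Definition simple_graph (n : nat) (adj : rel 'I_n) : Prop :=
  (forall i j, adj i j = adj j i) /\ (forall i, ~~ adj i i).

Definition adjmx (R : nzRingType) (n : nat) (adj : rel 'I_n) : 'M[R]_n :=
  \matrix_(i, j) (adj i j)%:R.

Definition Jmx (R : nzRingType) (k : nat) : 'M[R]_k := const_mx 1.
Definition ones (R : nzRingType) (k : nat) : 'cV[R]_k := const_mx 1.

Definition dotv (R : nzRingType) (k : nat) (u v : 'cV[R]_k) : R := (u^T *m v) 0 0.

(** If the eigenvalue [alpha] has an eigenvector [v] orthogonal to [1], normalising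
    [v] gives the right-hand side outright.  Otherwise, pairing the [g]-equation with
    [v] kills [(A - alpha I) g] (as [A] is symmetric) and leaves [<1,g> = mu/2];
    summing the [f]-equation gives [(m + alpha) <1,f> = m mu/2].  Together with
    [<1,f> + <1,g> = 0] this forces [(alpha + 2m) mu = 0], hence [mu = 0], [f = 0]
    (as [alpha != 0]) and [g] is a unit eigenvector orthogonal to [1]. *)
From mathcomp Require Import all_boot all_order all_algebra.
From mathcomp Require Import reals.
From mathcomp Require Import ring.
Set Implicit Arguments. Unset Strict Implicit. Unset Printing Implicit Defensive.
Import Order.TTheory GRing.Theory Num.Theory.
Local Open Scope ring_scope.

Section DotProduct.
Variable R : comNzRingType.

Lemma dotvE k (u v : 'cV[R]_k) : dotv u v = \sum_i u i 0 * v i 0.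
Proof. by rewrite /dotv mxE; apply: eq_bigr => i _; rewrite mxE. Qed.

Lemma dotvC k (u v : 'cV[R]_k) : dotv u v = dotv v u.
Proof. by rewrite !dotvE; apply: eq_bigr => i _; rewrite mulrC. Qed.

Lemma dotvZr k a (u v : 'cV[R]_k) : dotv u (a *: v) = a * dotv u v.
Proof. by rewrite !dotvE mulr_sumr; apply: eq_bigr => i _; rewrite mxE mulrCA. Qed.

Lemma dotvZl k a (u v : 'cV[R]_k) : dotv (a *: u) v = a * dotv u v.
Proof. by rewrite dotvC dotvZr dotvC. Qed.

Lemma dotvDr k (u v w : 'cV[R]_k) : dotv u (v + w) = dotv u v + dotv u w.
Proof. by rewrite !dotvE -big_split; apply: eq_bigr => i _; rewrite mxE mulrDr. Qed.

Lemma dotv0r k (u : 'cV[R]_k) : dotv u 0 = 0.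
Proof. by rewrite dotvE big1 // => i _; rewrite mxE mulr0. Qed.

Lemma dotv_ones k : dotv (ones R k) (ones R k) = k%:R.
Proof.
rewrite dotvE (eq_bigr (fun _ => 1)) => [|i _]; last by rewrite !mxE mulr1.
by rewrite sumr_const card_ord.
Qed.

Lemma dotv_mulmxr k (A : 'M[R]_k) (u v : 'cV[R]_k) :
  dotv u (A *m v) = dotv (A^T *m u) v.
Proof. by rewrite /dotv trmx_mul trmxK mulmxA. Qed.

Lemma mul_Jmx k (v : 'cV[R]_k) : Jmx R k *m v = dotv (ones R k) v *: ones R k.
Proof.
apply/matrixP => i j; rewrite !mxE dotvE mulr1 (ord1 j).
by apply: eq_bigr => l _; rewrite !mxE.
Qed.

Lemma dotv_ones_mul_Jmx k (v : 'cV[R]_k) :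
  dotv (ones R k) (Jmx R k *m v) = k%:R * dotv (ones R k) v.
Proof. by rewrite mul_Jmx dotvZr dotv_ones mulrC. Qed.

Lemma dotv_mulmx_eigen k (A : 'M[R]_k) a (v w : 'cV[R]_k) :
  A^T = A -> A *m v = a *: v -> dotv v ((A - a%:M) *m w) = 0.
Proof.
move=> symA Av; rewrite dotv_mulmxr linearB /= symA tr_scalar_mx mulmxBl Av.
by rewrite mul_scalar_mx subrr /dotv trmx0 mul0mx mxE.
Qed.

End DotProduct.

Section RealDotProduct.
Variable R : rcfType.

Lemma dotvv_gt0 k (v : 'cV[R]_k) : v != 0 -> 0 < dotv v v.
Proof.
move=> v_neq0; have [i vi_neq0] : exists i, v i 0 != 0.
  apply/existsP; apply: contraR v_neq0; rewrite negb_exists => /forallP v0.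
  by apply/eqP/matrixP => i j; rewrite (ord1 j) mxE; apply/eqP; rewrite -[_ == _]negbK v0.
rewrite dotvE (bigD1 i) //= -expr2 ltr_pwDl ?exprn_even_gt0 //.
by apply: sumr_ge0 => j _; rewrite -expr2 sqr_ge0.
Qed.

Definition normalize k (v : 'cV[R]_k) : 'cV[R]_k := (Num.sqrt (dotv v v))^-1 *: v.

Lemma dotv_normalize k (v : 'cV[R]_k) :
  v != 0 -> dotv (normalize v) (normalize v) = 1.
Proof.
move=> /dotvv_gt0 vv_gt0; rewrite dotvZl dotvZr mulrA -expr2 exprVn.
by rewrite sqr_sqrtr ?ltW // mulVf ?gt_eqF.
Qed.

Lemma normalized_eigenvector k (A : 'M[R]_k) a (v : 'cV[R]_k) :
  A *m v = a *: v -> v != 0 -> dotv (ones R k) v = 0 ->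
  exists g, [/\ A *m g = a *: g, dotv g g = 1 & dotv (ones R k) g = 0].
Proof.
move=> Av v_neq0 v1; exists (normalize v); split; last by rewrite dotvZr v1 mulr0.
  by rewrite -scalemxAr Av !scalerA mulrC.
exact: dotv_normalize.
Qed.

End RealDotProduct.

Lemma adjmx_sym (R : nzRingType) n (adj : rel 'I_n) :
  simple_graph adj -> (adjmx R adj)^T = adjmx R adj.
Proof. by case=> adjC _; apply/matrixP => i j; rewrite !mxE adjC. Qed.

Section ShiftedSystem.
Variables (R : fieldType) (n m : nat) (A : 'M[R]_n) (alpha c : R).
Variables (v g : 'cV[R]_n) (f : 'cV[R]_m).
Hypotheses (symA : A^T = A) (Av : A *m v = alpha *: v).
Hypothesis v1_neq0 : dotv (ones R n) v != 0.
Hypotheses (alpha_neq0 : alpha != 0) (alpha_neq_2m : alpha != - (2 * m)%:R).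
Hypothesis eq_f : (Jmx R m + alpha%:M) *m f = c *: ones R m.
Hypothesis eq_g : (A - Jmx R n - alpha%:M) *m g = - c *: ones R n.
Hypothesis sum_fg : dotv (ones R m) f + dotv (ones R n) g = 0.

Lemma shifted_eq_g : (A - alpha%:M) *m g = (dotv (ones R n) g - c) *: ones R n.
Proof.
have -> : A - alpha%:M = (A - Jmx R n - alpha%:M) + Jmx R n by rewrite addrAC subrK.
by rewrite mulmxDl eq_g mul_Jmx -scalerDl addrC.
Qed.

Lemma dotv_ones_g : dotv (ones R n) g = c.
Proof.
have := dotv_mulmx_eigen g symA Av; rewrite shifted_eq_g dotvZr dotvC.
by move/eqP; rewrite mulf_eq0 (negbTE v1_neq0) orbF subr_eq0 => /eqP.
Qed.

Lemma dotv_ones_f : dotv (ones R m) f = - c.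
Proof. by apply/eqP; rewrite -addr_eq0 -dotv_ones_g sum_fg. Qed.

Lemma shifted_rhs_eq0 : c = 0.
Proof.
have := congr1 (dotv (ones R m)) eq_f.
rewrite mulmxDl dotvDr dotv_ones_mul_Jmx mul_scalar_mx !dotvZr dotv_ones dotv_ones_f.
move=> sum_f; have : c * (alpha + (2 * m)%:R) = - (m%:R * - c + alpha * - c - c * m%:R).
  by rewrite natrM; ring.
rewrite sum_f subrr oppr0 => /eqP.
by rewrite mulf_eq0 addr_eq0 (negbTE alpha_neq_2m) orbF => /eqP.
Qed.

Lemma shifted_system_trivial :
  [/\ f = 0, A *m g = alpha *: g & dotv (ones R n) g = 0].
Proof.
rewrite dotv_ones_g shifted_rhs_eq0; split=> //.
  move: eq_f; rewrite mulmxDl mul_Jmx dotv_ones_f shifted_rhs_eq0 oppr0 scale0r add0r.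
  by rewrite mul_scalar_mx => /eqP; rewrite scaler_eq0 (negbTE alpha_neq0) => /eqP.
apply/eqP; rewrite -subr_eq0 -mul_scalar_mx -mulmxBl shifted_eq_g dotv_ones_g.
by rewrite shifted_rhs_eq0 subrr scale0r.
Qed.

End ShiftedSystem.

Theorem lemma3p6 (R : realType) (n m : nat) (adj : rel 'I_n) (alpha : R) :
  simple_graph adj -> (1 <= n)%N -> (1 <= m)%N ->
  eigenvalue (adjmx R adj) alpha ->
  alpha != 0 -> alpha != - m%:R -> alpha != - (2 * m)%:R ->
  (exists (mu : R) (f : 'cV[R]_m) (g : 'cV[R]_n),
      (Jmx R m + alpha%:M) *m f = (mu / 2) *: ones R m /\
      (adjmx R adj - Jmx R n - alpha%:M) *m g = - (mu / 2) *: ones R n /\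
      dotv f f + dotv g g = 1 /\
      dotv (ones R m) f + dotv (ones R n) g = 0)
  <->
  (exists g : 'cV[R]_n,
      adjmx R adj *m g = alpha *: g /\ dotv g g = 1 /\ dotv (ones R n) g = 0).
Proof.
move=> /(adjmx_sym R) symA _ _ /eigenvalueP [v vA].
rewrite -trmx_eq0 => v_neq0 alpha_neq0 _ alpha_neq_2m.
have Av : adjmx R adj *m v^T = alpha *: v^T by rewrite -{1}symA -trmx_mul vA linearZ.
split=> [[mu [f [g [eq_f [eq_g [norm_fg sum_fg]]]]]] | [g [Ag [norm_g g1]]]]; last first.
  exists 0, 0, g; rewrite mulmx0 mul0r oppr0 !scale0r !dotv0r !add0r !mulmxBl mul_Jmx g1.
  by rewrite scale0r subr0 mul_scalar_mx Ag subrr.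
have [v1_eq0 | v1_neq0] := eqVneq (dotv (ones R n) v^T) 0.
  have [w [? ? ?]] := normalized_eigenvector Av v_neq0 v1_eq0.
  by exists w.
have [f_eq0 Ag g1] :=
  shifted_system_trivial symA Av v1_neq0 alpha_neq0 alpha_neq_2m eq_f eq_g sum_fg.
by exists g; rewrite -norm_fg f_eq0 dotv0r add0r.
Qed.
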